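(* If $n$ is a positive integer that is non-composite ($n=1$ or $n$ prime), then \[ Z(2n-1)\equiv 0\pmod{n}, \] where $Z(m)=\sum_{k=0}^{m-1}\frac{1+(-1)^{k}k!(m-k-1)!}{m}$. *)

From mathcomp Require Import all_boot all_order all_algebra.
Set Implicit Arguments. Unset Strict Implicit. Unset Printing Implicit Defensive.
Import Order.TTheory GRing.Theory Num.Theory.
Local Open Scope ring_scope.

Definition Z (m : nat) : rat :=
  \sum_(k < m) (1 + (-1) ^+ k * (k`!)%:R * ((m - k - 1)`!)%:R) / m%:R.

(* Multiplying k! (N-k)! by N+2 = (k+1) + (N+1-k) turns the alternating sum
   S = \sum_(k <= N) (-1)^k k! (N-k)! into a telescoping sum, so that
   (N+2) S = (N+1)! (1 + (-1)^N).  For m = 2n-1 this gives Z(m) = 1 + (2n-2)!/n.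
   When n is prime, (2n-2)!/n = (n-1)! (2n-2)(2n-3)...(n+1), whose second factor
   is congruent to (n-2)! = 1 mod n, so Wilson's theorem yields
   Z(m) = (n-1)! + 1 = 0 mod n. *)

From mathcomp Require Import all_boot all_order all_algebra.
From mathcomp Require Import zify ring.
Import GRing.Theory Num.Theory.

Lemma ffactDr_mod a d k : (a + d) ^_ k = a ^_ k %[mod d].
Proof.
elim: k a => [|k IHk] [|a] //.
  by rewrite add0n !ffactnS modnMr mul0n mod0n.
by rewrite addSn !ffactSS -modnMm IHk -addSn modnDr modnMm.
Qed.

Lemma fact_predpred_mod n : prime n -> (n.-2)`! = 1 %[mod n].
Proof.
case: n => [|[|p]] // p_prime.
have /eqP Wilson_p : p.+2 %| (p.+1 * p`!).+1 by rewrite -factS -Wilson.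
rewrite /= -[in LHS](addn0 p`!) -[in LHS]Wilson_p modnDmr.
have -> : p`! + (p.+1 * p`!).+1 = p`! * p.+2 + 1 by ring.
by rewrite modnMDl.
Qed.

Lemma dvdn_fact_double_pred n : 0 < n -> n %| (2 * n - 2)`!.
Proof. by case: n => [|[|n]] // _; apply: dvdn_fact; lia. Qed.

Lemma prime_dvd_fact_double_pred_divS n :
  prime n -> n %| ((2 * n - 2)`! %/ n).+1.
Proof.
move=> n_prime; have n_gt1 := prime_gt1 n_prime; have n_gt0 := ltnW n_gt1.
have quotient : (2 * n - 2)`! %/ n = (n.-1)`! * (2 * n - 2) ^_ n.-2.
  rewrite -(@ffact_fact (2 * n - 2) n.-2); last by lia.
  have -> : (2 * n - 2 - n.-2 = (n.-1).+1)%N by lia.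
  by rewrite factS (prednK n_gt0) mulnCA (mulKn _ n_gt0) mulnC.
have ffact_mod : (2 * n - 2) ^_ n.-2 = 1 %[mod n].
  have -> : (2 * n - 2 = n.-2 + n)%N by lia.
  by rewrite ffactDr_mod ffactnn fact_predpred_mod.
rewrite quotient /dvdn -addn1 -modnDml -modnMmr ffact_mod modnMmr muln1.
by rewrite modnDml addn1 -/(dvdn _ _) -Wilson.
Qed.

Lemma fact_pairS k m : k`! * m.+1`! + k.+1`! * m`! = (k + m).+2 * (k`! * m`!).
Proof. rewrite !factS; ring. Qed.

Local Open Scope ring_scope.

Lemma sum_alternating_fact_pairs (R : comPzRingType) N :
  N.+2%:R * \sum_(k < N.+1) (-1) ^+ k * k`!%:R * (N - k)`!%:R
  = N.+1`!%:R * (1 + (-1) ^+ N) :> R.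
Proof.
pose f k : R := - (-1) ^+ k * (k`! * (N.+1 - k)`!)%:R.
rewrite mulr_sumr.
rewrite -(big_mkord xpredT (fun k => N.+2%:R * ((-1) ^+ k * k`!%:R * (N - k)`!%:R))).
rewrite (telescope_sumr_eq f) // => [|k /andP[_]]; last rewrite ltnS => k_le_N.
  by rewrite /f subnn subn0 fact0 muln1 mul1n expr0 exprS; ring.
have := fact_pairS k (N - k); rewrite subnKC // => /(congr1 (fun x => x%:R : R)).
rewrite /f subSS (subSn k_le_N) natrD !natrM exprS => pairS.
transitivity ((-1) ^+ k * (N.+2%:R * (k`!%:R * (N - k)`!%:R)) : R); first ring.
rewrite -pairS; ring.
Qed.

Lemma Z_succ N : Z N.+1 = 1 + N`!%:R * (1 + (-1) ^+ N) / N.+2%:R.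
Proof.
have sum_eq : \sum_(k < N.+1) (-1) ^+ k * k`!%:R * (N.+1 - k - 1)`!%:R
    = N.+1`!%:R * (1 + (-1) ^+ N) / N.+2%:R :> rat.
  rewrite -(sum_alternating_fact_pairs _ N) [RHS]mulrC mulKf ?pnatr_eq0 //.
  by apply: eq_bigr => k _; rewrite subnAC subn1.
rewrite /Z -mulr_suml big_split /= sumr_const card_ord sum_eq factS natrM.
by field; rewrite -natrD nat1r !pnatr_eq0.
Qed.

Lemma Z_double_pred n : (0 < n)%N -> Z (2 * n - 1) = 1 + ((2 * n - 2)`! %/ n)%:R.
Proof.
move=> n_gt0; have n_neq0 : n%:R != 0 :> rat by rewrite pnatr_eq0 -lt0n.
have even : odd (2 * n - 2) = false by rewrite oddB ?odd_mul //; lia.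
rewrite (_ : 2 * n - 1 = (2 * n - 2).+1)%N; last by lia.
rewrite Z_succ -signr_odd even (_ : (2 * n - 2).+2 = 2 * n)%N; last by lia.
rewrite natr_div ?dvdn_fact_double_pred ?unitfE // natrM.
by field.
Qed.

Theorem mainTheorem10 (n : nat) :
  (0 < n)%N -> (n = 1%N \/ prime n) ->
  exists z : int, Z (2 * n - 1) = z%:~R /\ (n%:Z %| z)%Z.
Proof.
move=> n_gt0 n_noncomposite.
exists ((2 * n - 2)`! %/ n).+1%:Z; split.
  by rewrite Z_double_pred // -pmulrn nat1r.
case: n_noncomposite => [-> | n_prime]; first exact: dvd1z.
by rewrite dvdzE /= prime_dvd_fact_double_pred_divS.
Qed.
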